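(* Let $x$ be a random variable with values in $[-1,1]$, and for $\eta>0$ let $\epsilon(\eta)=\frac1\eta\ln\mathbb E[e^{-\eta x}]$. Then for every $\eta>0$, \[ \frac1\eta\ln\mathbb E\big[e^{c\eta^2x^2-\eta x}\big]\;\le\;\epsilon(2\eta)+c\,\eta\,\epsilon(2\eta)^2,\qquad\text{where } c=\frac{1}{1+\sqrt{1+4\eta^2}}. \] *)

From Stdlib Require Import Reals.
Open Scope R_scope.

(* The law of a random variable x with values in [-1,1] is encoded by its
   expectation operator E, f |-> E[f(x)], on continuous test functions.
   By the Riesz representation theorem, such operators (positive, linear,
   normalised functionals on continuous functions, positivity tested on
   [-1,1]) correspond exactly to Borel probability measures on [-1,1].
   All integrands of the theorem are continuous functions of x. *)
Definition is_expectation (E : (R -> R) -> R) : Prop :=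
  (forall f g, continuity f -> continuity g ->
     E (fun x => f x + g x) = E f + E g) /\
  (forall (a : R) f, continuity f -> E (fun x => a * f x) = a * E f) /\
  (forall f g, continuity f -> continuity g ->
     (forall x, -1 <= x <= 1 -> f x <= g x) -> E f <= E g) /\
  E (fun _ => 1) = 1.

Definition eps (E : (R -> R) -> R) (eta : R) : R :=
  / eta * ln (E (fun x => exp (- eta * x))).

From Coquelicot Require Import Coquelicot.
From Stdlib Require Import Reals Lra Psatz FunctionalExtensionality.
Open Scope R_scope.

(* Substitute s = -2 eta x, which ranges over [-a, a] with a = 2 eta: the
   exponent becomes q(s) = c s^2/4 + s/2 and the claim reads
   E[exp (q s)] <= exp (q (ln E[e^s])).  This is Jensen's inequality for
   u |-> exp (q (ln u)), which is concave on [e^-a, e^a] as soon as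
   c^2 a^2 + 2c <= 1; the given c is the largest such c, with equality.  Jensen
   is applied in tangent-line form, which only needs linearity and
   monotonicity of E on continuous functions. *)

Lemma nondecreasing_of_derive_nonneg (f df : R -> R) (a b : R) :
  (forall x, is_derive f x (df x)) ->
  (forall x, a <= x <= b -> 0 <= df x) -> a <= b -> f a <= f b.
Proof.
  intros Hd Hpos Hab.
  destruct (MVT_gen f a b df) as [z [Hz Hmvt]].
  - intros x _; apply Hd.
  - intros x _. apply derivable_continuous_pt. exists (df x).
    apply is_derive_Reals, Hd.
  - rewrite Rmin_left, Rmax_right in Hz by lra.
    assert (0 <= df z * (b - a)) by (apply Rmult_le_pos; [apply Hpos|]; lra).
    lra.
Qed.

Lemma le_at_of_derive_sign (f df : R -> R) (a b t0 t : R) :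
  (forall x, is_derive f x (df x)) ->
  (forall x, a <= x <= t0 -> 0 <= df x) ->
  (forall x, t0 <= x <= b -> df x <= 0) ->
  a <= t <= b -> f t <= f t0.
Proof.
  intros Hd Hinc Hdec Ht.
  destruct (Rle_dec t t0) as [Hle | Hgt].
  - apply (nondecreasing_of_derive_nonneg f df); auto.
    intros x Hx; apply Hinc; lra.
  - enough (- f t0 <= - f t) by lra.
    apply (nondecreasing_of_derive_nonneg (fun x => - f x) (fun x => - df x));
      [| | lra].
    + intros x. apply (is_derive_opp f x (df x)), Hd.
    + intros x Hx. enough (df x <= 0) by lra. apply Hdec; lra.
Qed.

Lemma exp_le_exp (x y : R) : x <= y -> exp x <= exp y.
Proof. intros [Hlt | ->]; [left; apply exp_increasing |]; lra. Qed.

Lemma continuity_of_ex_derive (f : R -> R) :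
  (forall x, ex_derive f x) -> continuity f.
Proof.
  intros Hd x. destruct (Hd x) as [l Hl].
  apply derivable_continuous_pt. exists l. apply is_derive_Reals, Hl.
Qed.

Section Expectation.

Variable E : (R -> R) -> R.
Hypothesis HE : is_expectation E.

Lemma expectation_const (a : R) : E (fun _ => a) = a.
Proof.
  destruct HE as [_ [Hscal [_ H1]]].
  transitivity (E (fun x => a * (fun _ => 1) x));
    [f_equal; apply functional_extensionality; intros; ring |].
  rewrite Hscal, H1; [ring |].
  apply continuity_const. intros ? ?; reflexivity.
Qed.

Lemma expectation_ge_const (f : R -> R) (lo : R) : continuity f ->
  (forall x, -1 <= x <= 1 -> lo <= f x) -> lo <= E f.
Proof.
  destruct HE as [_ [_ [Hmon _]]]. intros Hf Hlo.
  rewrite <- (expectation_const lo). apply Hmon; auto.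
  apply continuity_const. intros ? ?; reflexivity.
Qed.

Lemma expectation_le_const (f : R -> R) (hi : R) : continuity f ->
  (forall x, -1 <= x <= 1 -> f x <= hi) -> E f <= hi.
Proof.
  destruct HE as [_ [_ [Hmon _]]]. intros Hf Hhi.
  rewrite <- (expectation_const hi). apply Hmon; auto.
  apply continuity_const. intros ? ?; reflexivity.
Qed.

Lemma expectation_le_of_tangent (f g : R -> R) (A K : R) :
  continuity f -> continuity g ->
  (forall x, -1 <= x <= 1 -> f x <= A + K * (g x - E g)) -> E f <= A.
Proof.
  destruct HE as [Hadd [Hscal [Hmon _]]]. intros Hf Hg Htan.
  assert (Hcst : continuity (fun _ => A - K * E g)).
  { apply continuity_const. intros ? ?; reflexivity. }
  assert (HKg : continuity (fun x => K * g x)) by (apply continuity_scal, Hg).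
  assert (Hline : E (fun x => A - K * E g + K * g x) = A).
  { rewrite (Hadd (fun _ => A - K * E g) (fun x => K * g x)), Hscal,
      expectation_const by assumption.
    ring. }
  rewrite <- Hline. apply Hmon; [assumption | |].
  - apply (continuity_plus _ _ Hcst HKg).
  - intros x Hx. specialize (Htan x Hx). lra.
Qed.

End Expectation.

Definition qexp (c s : R) : R := c * s ^ 2 / 4 + s / 2.

(* The derivative of u |-> exp (qexp c (ln u)) at u = exp s. *)
Definition qexp_slope (c s : R) : R := exp (qexp c s - s) * (c * s / 2 + 1 / 2).

Lemma continuity_qexp (c : R) : continuity (qexp c).
Proof. apply continuity_of_ex_derive. intros x. unfold qexp. auto_derive. trivial. Qed.

Lemma is_derive_qexp_slope (c s : R) :
  is_derive (qexp_slope c) s (exp (qexp c s - s) * ((c ^ 2 * s ^ 2 - 1) / 4 + c / 2)).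
Proof.
  unfold qexp_slope, qexp. auto_derive; [trivial |].
  replace (c * s ^ 2 / 4 + s / 2 - s) with (c * (s * (s * 1)) * / 4 + s * / 2 + - s)
    by field.
  field.
Qed.

Lemma qexp_slope_nonincreasing (c a s s' : R) : 0 <= c -> c ^ 2 * a ^ 2 + 2 * c <= 1 ->
  -a <= s -> s <= s' -> s' <= a -> qexp_slope c s' <= qexp_slope c s.
Proof.
  intros Hc Hca Hs Hss' Hs'.
  enough (- qexp_slope c s <= - qexp_slope c s') by lra.
  apply (nondecreasing_of_derive_nonneg (fun x => - qexp_slope c x)
           (fun x => - (exp (qexp c x - x) * ((c ^ 2 * x ^ 2 - 1) / 4 + c / 2))));
    [| | assumption].
  - intros x. apply (is_derive_opp (qexp_slope c) x), is_derive_qexp_slope.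
  - intros x Hx. pose proof (exp_pos (qexp c x - x)).
    assert (c ^ 2 * x ^ 2 <= c ^ 2 * a ^ 2) by (apply Rmult_le_compat_l; nra).
    nra.
Qed.

Lemma exp_qexp_le_tangent (c a t t0 : R) : 0 <= c -> c ^ 2 * a ^ 2 + 2 * c <= 1 ->
  -a <= t <= a -> -a <= t0 <= a ->
  exp (qexp c t) <= exp (qexp c t0) + qexp_slope c t0 * (exp t - exp t0).
Proof.
  intros Hc Hca Ht Ht0.
  set (K := qexp_slope c t0).
  enough (exp (qexp c t) - K * exp t <= exp (qexp c t0) - K * exp t0) by lra.
  apply (le_at_of_derive_sign (fun x => exp (qexp c x) - K * exp x)
           (fun x => exp x * (qexp_slope c x - K)) (-a) a); [| | | assumption].
  - intros x. unfold qexp_slope, qexp. auto_derive; [trivial |].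
    replace (c * x ^ 2 / 4 + x / 2 - x) with (c * (x * (x * 1)) * / 4 + x * / 2 + - x)
      by field.
    rewrite (exp_plus (c * (x * (x * 1)) * / 4 + x * / 2) (- x)), exp_Ropp. field. apply Rgt_not_eq, exp_pos.
  - intros x Hx. pose proof (exp_pos x).
    assert (K <= qexp_slope c x) by (apply (qexp_slope_nonincreasing c a); lra).
    nra.
  - intros x Hx. pose proof (exp_pos x).
    assert (qexp_slope c x <= K) by (apply (qexp_slope_nonincreasing c a); lra).
    nra.
Qed.

Lemma ln_expectation_exp_qexp_le (E : (R -> R) -> R) (g : R -> R) (c a : R) :
  is_expectation E -> continuity g -> 0 <= c -> c ^ 2 * a ^ 2 + 2 * c <= 1 ->
  (forall x, -1 <= x <= 1 -> -a <= g x <= a) ->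
  ln (E (fun x => exp (qexp c (g x)))) <= qexp c (ln (E (fun x => exp (g x)))).
Proof.
  intros HE Hg Hc Hca Hrange.
  assert (Hexpg : continuity (fun x => exp (g x))).
  { apply (continuity_comp g exp Hg), derivable_continuous, derivable_exp. }
  assert (Hf : continuity (fun x => exp (qexp c (g x)))).
  { apply (continuity_comp (fun x => qexp c (g x)) exp);
      [apply (continuity_comp g (qexp c) Hg), continuity_qexp |].
    apply derivable_continuous, derivable_exp. }
  set (m := E (fun x => exp (g x))).
  assert (Hm : exp (-a) <= m <= exp a).
  { split; [apply expectation_ge_const | apply expectation_le_const]; try assumption;
      intros x Hx; apply exp_le_exp; apply Hrange, Hx. }
  assert (Hm0 : 0 < m) by (pose proof (exp_pos (-a)); lra).
  set (t0 := ln m).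
  assert (Ht0 : -a <= t0 <= a).
  { unfold t0. split.
    - rewrite <- (ln_exp (-a)). apply ln_le; [apply exp_pos | lra].
    - rewrite <- (ln_exp a). apply ln_le; lra. }
  assert (Hlo : exp (- a / 2) <= E (fun x => exp (qexp c (g x)))).
  { apply expectation_ge_const; [assumption | assumption |].
    intros x Hx. apply exp_le_exp. specialize (Hrange x Hx). unfold qexp.
    assert (0 <= c * g x ^ 2) by (apply Rmult_le_pos; nra). lra. }
  rewrite <- (ln_exp (qexp c t0)). apply ln_le; [pose proof (exp_pos (-a/2)); lra |].
  apply (expectation_le_of_tangent E HE _ _ _ (qexp_slope c t0) Hf Hexpg).
  intros x Hx. fold m. rewrite <- (exp_ln m Hm0).
  apply (exp_qexp_le_tangent c a); [assumption | assumption | apply Hrange, Hx | assumption].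
Qed.

Lemma critical_coef (a : R) :
  let c := / (1 + sqrt (1 + a ^ 2)) in 0 < c /\ c ^ 2 * a ^ 2 + 2 * c = 1.
Proof.
  intros c. unfold c. set (S := sqrt (1 + a ^ 2)).
  pose proof (sqrt_pos (1 + a ^ 2)) as HS0. fold S in HS0.
  assert (HSS : S * S = 1 + a ^ 2) by (apply sqrt_sqrt; nra).
  split; [apply Rinv_0_lt_compat; lra |].
  replace (a ^ 2) with (S * S - 1) by lra.
  field. lra.
Qed.

Theorem mainTheorem9 (E : (R -> R) -> R) (HE : is_expectation E)
  (eta : R) (Heta : 0 < eta) :
  let c := / (1 + sqrt (1 + 4 * eta ^ 2)) in
  / eta * ln (E (fun x => exp (c * eta ^ 2 * x ^ 2 - eta * x)))
    <= eps E (2 * eta) + c * eta * (eps E (2 * eta)) ^ 2.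
Proof.
  intros c.
  destruct (critical_coef (2 * eta)) as [Hc Hca].
  replace (/ (1 + sqrt (1 + (2 * eta) ^ 2))) with c in Hc, Hca
    by (unfold c; repeat f_equal; ring).
  assert (Hg : continuity (fun x => - (2 * eta) * x)).
  { apply continuity_scal, derivable_continuous, derivable_id. }
  pose proof (ln_expectation_exp_qexp_le E (fun x => - (2 * eta) * x) c (2 * eta)
                HE Hg (Rlt_le _ _ Hc) (Req_le _ _ Hca)) as Hjensen.
  cbv beta in Hjensen.
  replace (fun x => exp (qexp c (- (2 * eta) * x)))
    with (fun x => exp (c * eta ^ 2 * x ^ 2 - eta * x)) in Hjensen
    by (apply functional_extensionality; intros x; unfold qexp; f_equal; field).
  unfold eps.
  set (t0 := ln (E (fun x => exp (- (2 * eta) * x)))) in *.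
  replace (/ (2 * eta) * t0 + c * eta * (/ (2 * eta) * t0) ^ 2) with (/ eta * qexp c t0)
    by (unfold qexp; field; lra).
  apply Rmult_le_compat_l; [left; apply Rinv_0_lt_compat, Heta |].
  apply Hjensen. intros x Hx. nra.
Qed.
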